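(* For every $v\geq 9$ there exists a connected symmetric configuration $v_3$ which has a blocking set of cardinality $q$ for every integer $q$ with $\lceil v/3\rceil\leq q\leq\lfloor 2v/3\rfloor$.
   Context: A symmetric configuration $v_3$ consists of a set of $v$ points and a collection of $v$ blocks, each block being a 3-element subset of the points, such that every point lies in exactly 3 blocks and any two distinct points lie in at most one common block. It is connected if it is not the union of two configurations on disjoint nonempty point sets (equivalently, its point–block incidence graph is connected). A blocking set is a subset $Q$ of the points such that every block contains at least one point of $Q$ and at least one point not in $Q$. *)

From mathcomp Require Import all_boot.
Set Implicit Arguments. Unset Strict Implicit. Unset Printing Implicit Defensive.

Definition is_config_v3 (v : nat) (B : 'I_v -> {set 'I_v}) : Prop :=
  (forall j, #|B j| = 3) /\
  (forall x : 'I_v, #|[set j | x \in B j]| = 3) /\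
  (forall x y : 'I_v, x != y -> #|[set j | (x \in B j) && (y \in B j)]| <= 1).

(* point-block incidence graph, vertex set 'I_v + 'I_v (points inl, blocks inr) *)
Definition incid (v : nat) (B : 'I_v -> {set 'I_v}) : rel ('I_v + 'I_v) :=
  fun a b => match a, b with
             | inl x, inr j => x \in B j
             | inr j, inl x => x \in B j
             | _, _ => false
             end.

Definition config_connected (v : nat) (B : 'I_v -> {set 'I_v}) : Prop :=
  forall a b : 'I_v + 'I_v, connect (incid B) a b.

Definition blocking_set (v : nat) (B : 'I_v -> {set 'I_v}) (Q : {set 'I_v}) : Prop :=
  forall j, (B j :&: Q != set0) /\ (B j :\: Q != set0).

From mathcomp Require Import all_boot zify.
Set Implicit Arguments. Unset Strict Implicit. Unset Printing Implicit Defensive.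

(* Write v = 2a + c with c <= a <= c + 2, so that a = ceil(v/3) and
   a + c = floor(2v/3).  The points 0, ..., v-1 are split into three
   consecutive ranges: X = [0, a), Y = [a, a + c) and Z = [a + c, v), so
   |X| = |Z| = a and |Y| = c.  We build an explicit symmetric configuration
   v_3 in which every block meets both X and Z; then every set Q with
   X <= Q <= X u Y is a blocking set, and the initial segments [0, q) with
   a <= q <= a + c realise every size in the required range. *)

Lemma card_three v (P : pred nat) p1 p2 p3 :
  [/\ p1 < v, p2 < v & p3 < v] -> [/\ p1 != p2, p1 != p3 & p2 != p3] ->
  (forall n, n < v -> P n = [|| n == p1, n == p2 | n == p3]) ->
  #|[set x : 'I_v | P x]| = 3.
Proof.
case=> h1 h2 h3 [d12 d13 d23] hP.
set s := [:: Ordinal h1; Ordinal h2; Ordinal h3].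
have -> : [set x : 'I_v | P x] = [set x in s] by apply/setP => x; rewrite !inE hP.
rewrite cardsE; apply/card_uniqP.
by rewrite /= !inE -!val_eqE /= (negbTE d12) (negbTE d13) (negbTE d23).
Qed.

Section General.
Variables (v : nat) (B : 'I_v -> {set 'I_v}).

Lemma card_initial_segment q : q <= v -> #|[set x : 'I_v | x < q]| = q.
Proof.
move=> hq; have -> : [set x : 'I_v | x < q] = widen_ord hq @: [set: 'I_q].
  apply/setP => x; rewrite inE; apply/idP/imsetP => [hx | [i _ ->]]; last exact: (ltn_ord i).
  by exists (Ordinal hx) => //; apply: val_inj.
rewrite card_imset ?cardsT ?card_ord // => i j /(congr1 val) eq_ij; exact: val_inj.
Qed.

Lemma initial_segment_blocking lo hi q :
  (forall j, exists2 x, x \in B j & x < lo) ->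
  (forall j, exists2 x, x \in B j & hi <= x) ->
  lo <= q <= hi -> blocking_set B [set x : 'I_v | x < q].
Proof.
move=> low high /andP[hlo hhi] j; split; apply/set0Pn.
  by have [x hx hxlo] := low j; exists x; rewrite !inE hx (leq_trans hxlo).
have [x hx hxhi] := high j; exists x; rewrite !inE hx andbT -leqNgt.
exact: leq_trans hhi hxhi.
Qed.

(* Double counting: when all blocks have k points, the degrees sum to v k,
   so if every point lies on at least k blocks it lies on exactly k. *)
Lemma degree_eq_of_ge k :
  (forall j, #|B j| = k) -> (forall x, k <= #|[set j | x \in B j]|) ->
  forall x, #|[set j | x \in B j]| = k.
Proof.
move=> hB hdeg.
have sum_deg : \sum_x #|[set j | x \in B j]| = \sum_(x : 'I_v) k.
  rewrite sum_nat_const card_ord -[v in v * k]card_ord -sum_nat_const.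
  under eq_bigr => x _ do rewrite -sum1dep_card big_mkcond.
  rewrite exchange_big; apply: eq_bigr => j _.
  by rewrite -big_mkcond sum1dep_card cardsE hB.
have [_] := leqif_sum (P := xpredT) (fun x _ => leqif_eq (hdeg x)).
rewrite sum_deg eqxx => /esym/forallP all_eq x.
by have /eqP := all_eq x.
Qed.

Lemma incid_sym : symmetric (incid B).
Proof. by move=> [x|j] [y|k]. Qed.

Lemma connect_collinear j x y :
  x \in B j -> y \in B j -> connect (incid B) (inl x) (inl y).
Proof.
move=> hx hy; apply: connect_trans (connect1 (hx : incid B (inl x) (inr j))) _.
by rewrite (sym_connect_sym incid_sym); apply: connect1.
Qed.

Lemma connect_descent p0 :
  (forall p : 'I_v, p != p0 -> exists2 p' : 'I_v, p' < p & connect (incid B) (inl p') (inl p)) ->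
  forall p, connect (incid B) (inl p0) (inl p).
Proof.
move=> desc p; have [n] := ubnP (val p); elim: n p => // n IH p hpn.
have [-> | /desc [p' hp'p hconn]] := eqVneq p p0; first exact: connect0.
exact: connect_trans (IH p' (leq_trans hp'p hpn)) hconn.
Qed.

Lemma connected_of_point p0 :
  (forall p, connect (incid B) (inl p0) (inl p)) -> (forall j, exists x, x \in B j) ->
  config_connected B.
Proof.
move=> from_p0 nonempty.
have root w : connect (incid B) (inl p0) w.
  case: w => [p | j]; first exact: from_p0.
  have [x hx] := nonempty j; exact: connect_trans (from_p0 x) (connect1 (hx : incid B (inl x) (inr j))).
by move=> u w; apply: connect_trans (root w); rewrite (sym_connect_sym incid_sym).
Qed.
End General.

(* Writing x_i = i, y_j = a + j and z_k = a + c + k, and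
   s for the index of a block inside its family, the blocks are
     t = s      (s < a):  x_s, z_s and  y_(s+1) if s+1 < c,
                                        x_(s+1) if c <= s+1 < a,  y_0 if s+1 = a;
     t = a + s  (s < a):  x_s, z_(s+2 mod a) and  y_(s+2) if s+2 < c,
                                        y_(s+2-a) if s+2 >= a,  z_(s+3 mod a) otherwise;
     t = 2a + s (s < c):  x_s, z_(s+1 mod a) and y_s.
   Each block thus contains a point of X and a point of Z. *)
Section Construction.
Variables a c : nat.

Local Notation ptY j := (a + j) (only parsing).
Local Notation ptZ k := (a + c + k) (only parsing).

Definition first_block (s p : nat) : bool :=
  [|| p == s, p == ptZ s,
      (s.+1 < c) && (p == ptY s.+1),
      (c <= s.+1 < a) && (p == s.+1)
    | (s.+1 == a) && (p == ptY 0)].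

Definition second_block (s p : nat) : bool :=
  [|| p == s,
      (s.+2 < a) && (p == ptZ s.+2),
      (a <= s.+2) && (p == ptZ (s.+2 - a)),
      (s.+2 < c) && (p == ptY s.+2),
      (a <= s.+2) && (p == ptY (s.+2 - a)),
      [&& c <= s.+2, s.+3 < a & p == ptZ s.+3]
    | [&& c <= s.+2, s.+3 == a & p == ptZ 0]].

Definition third_block (s p : nat) : bool :=
  [|| p == s,
      (s.+1 < a) && (p == ptZ s.+1),
      (s.+1 == a) && (p == ptZ 0)
    | p == ptY s].

Definition on_block (t p : nat) : bool :=
  [|| (t < a) && first_block t p,
      (a <= t < 2 * a) && second_block (t - a) p
    | (2 * a <= t) && third_block (t - 2 * a) p].

Lemma on_block_first t : t < a -> on_block t =1 first_block t.
Proof.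
move=> ht p; rewrite /on_block.
have [-> ->] : (a <= t) = false /\ (2 * a <= t) = false by split; apply/negbTE; lia.
by rewrite ht /= orbF.
Qed.

Lemma on_block_second t : a <= t < 2 * a -> on_block t =1 second_block (t - a).
Proof.
move=> ht p; rewrite /on_block.
have [-> ->] : (t < a) = false /\ (2 * a <= t) = false by split; apply/negbTE; lia.
by rewrite ht /= orbF.
Qed.

Lemma on_block_third t : 2 * a <= t -> on_block t =1 third_block (t - 2 * a).
Proof.
move=> ht p; rewrite /on_block.
have [-> ->] : (t < a) = false /\ (t < 2 * a) = false by split; apply/negbTE; lia.
by rewrite ht /= andbF.
Qed.

Lemma block_family t : [\/ t < a, a <= t < 2 * a | 2 * a <= t].
Proof.
case: (ltnP t a) => ?; first by constructor 1.
by case: (ltnP t (2 * a)) => ?; [constructor 2; apply/andP | constructor 3].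
Qed.

Ltac unfold_on_block :=
  repeat match goal with
  | h : is_true (?t < a) |- context [on_block ?t _] => rewrite !(on_block_first h)
  | h : is_true (a <= ?t < 2 * a) |- context [on_block ?t _] => rewrite !(on_block_second h)
  | h : is_true (2 * a <= ?t) |- context [on_block ?t _] => rewrite !(on_block_third h)
  end; rewrite /first_block /second_block /third_block.

Ltac split_ands :=
  repeat match goal with H : is_true (_ && _) |- _ => case/andP: H => ? ? end.
Ltac clear_ors :=
  repeat match goal with H : is_true (_ || _) |- _ => clear H end.
Ltac split_ors :=
  split_ands;
  repeat match goal with H : is_true (_ || _) |- _ =>
    case/orP: H => H; split_ands; try (solve [clear_ors; lia]) end.

Ltac prove_bool :=
  lazymatch goal with
  | |- is_true (_ || _) => first [apply/orP; left; prove_bool | apply/orP; right; prove_bool]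
  | |- is_true (_ && _) => apply/andP; split; prove_bool
  | |- _ => lia
  end.

Ltac prove_on_block := rewrite /on_block /first_block /second_block /third_block; prove_bool.

(* The construction is valid for c <= a <= c + 2 and v = 2a + c >= 9 (for
   v = 8 two points would share two blocks). *)
Hypotheses (hca : c <= a) (hac : a <= c + 2) (hv : 9 <= 2 * a + c).

Local Notation v := (2 * a + c).

Ltac block_triple p1 p2 p3 :=
  exists p1, p2, p3; split; [by split; lia | by split; lia |];
  move=> n hn; apply/idP/idP; unfold_on_block;
  [move=> ?; split_ors | by case/or3P => /eqP ->; prove_bool].

Lemma block_points t : t < v -> exists p1 p2 p3,
  [/\ [/\ p1 < v, p2 < v & p3 < v], [/\ p1 != p2, p1 != p3 & p2 != p3] &
      forall n, n < v -> on_block t n = [|| n == p1, n == p2 | n == p3]].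
Proof.
move=> ht; case: (block_family t) => hfam.
- have [?|?] := ltnP t.+1 c; first by block_triple t (a + c + t) (a + t.+1).
  have [?|?] := eqVneq t.+1 a; first by block_triple t (a + c + t) a.
  by block_triple t (a + c + t) t.+1.
- have [?|?] := ltnP (t + 2) (a + c); first by block_triple (t - a) (c + t + 2) (t + 2).
  have [?|?] := ltnP (t + 3) (2 * a); first by block_triple (t - a) (c + t + 2) (c + t + 3).
  have [?|?] := eqVneq (t + 3) (2 * a); first by block_triple (t - a) (c + t + 2) (a + c).
  by block_triple (t - a) (c + t + 2 - a) (t + 2 - a).
- have [?|?] := ltnP (t + 1) (3 * a); first by block_triple (t - 2 * a) (c + t + 1 - a) (t - a).
  by block_triple (t - 2 * a) (a + c) (t - a).
Qed.

Ltac three_blocks t1 t2 t3 :=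
  exists t1, t2, t3; split; [by split; lia | by split; lia | by split; prove_on_block].

Lemma point_blocks p : p < v -> exists t1 t2 t3,
  [/\ [/\ t1 < v, t2 < v & t3 < v], [/\ t1 != t2, t1 != t3 & t2 != t3] &
      [/\ on_block t1 p, on_block t2 p & on_block t3 p]].
Proof.
move=> hp; have [pa|pa] := ltnP p a.
  have [?|?] := ltnP p c; first by three_blocks p (a + p) (2 * a + p).
  by three_blocks p (p - 1) (a + p).
have [?|?] := ltnP p (a + c).
  have [?|?] := eqVneq p a; first by three_blocks (a - 1) (2 * a - 2) (2 * a).
  have [?|?] := eqVneq p (a + 1); first by three_blocks 0 (2 * a - 1) (2 * a + 1).
  by three_blocks (p - a - 1) (p - 2) (a + p).
have [?|?] := eqVneq p (a + c).
  have [?|?] := eqVneq c a; first by three_blocks 0 (2 * a - 2) (3 * a - 1).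
  by three_blocks 0 (2 * a - 2) (2 * a - 3).
have [?|?] := eqVneq p (a + c + 1); first by three_blocks 1 (2 * a - 1) (2 * a).
have [?|?] := leqP p (a + 2 * c); first by three_blocks (p - a - c) (p - c - 2) (a + p - c - 1).
by three_blocks (p - a - c) (p - c - 2) (p - c - 3).
Qed.

Lemma on_block_unique t1 t2 p1 p2 :
  t1 < v -> t2 < v -> p1 < v -> p2 < v -> p1 != p2 ->
  on_block t1 p1 -> on_block t1 p2 -> on_block t2 p1 -> on_block t2 p2 -> t1 = t2.
Proof.
move=> ? ? ? ? ?; case: (block_family t1) => ?; case: (block_family t2) => ?;
  unfold_on_block => *; split_ors.
Qed.

Lemma block_meets_X t : t < v -> exists2 p, p < a & on_block t p.
Proof.
move=> ht; case: (block_family t) => ?; [exists t | exists (t - a) | exists (t - 2 * a)];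
  by [lia | prove_on_block].
Qed.

Lemma block_meets_Z t : t < v -> exists2 p, a + c <= p < v & on_block t p.
Proof.
move=> ht; case: (block_family t) => hfam.
- by exists (a + c + t); [lia | prove_on_block].
- have [?|?] := ltnP (t + 2) (2 * a).
    by exists (c + t + 2); [lia | prove_on_block].
  by exists (c + t + 2 - a); [lia | prove_on_block].
- have [?|?] := ltnP (t + 1) (3 * a).
    by exists (c + t + 1 - a); [lia | prove_on_block].
  by exists (a + c); [lia | prove_on_block].
Qed.

(* Every point p > 0 is linked to a smaller point p' through a point z
   collinear with both: x_1 -- z_1 -- x_0 and x_p -- z_p -- x_(p-2) for
   p >= 2 in X, while z = p itself for p in Y or Z, which is collinear with
   x_(p-a), resp. x_(p-a-c). *)
Lemma linked_to_smaller p : 0 < p < v -> exists p' z t1 t2,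
  [/\ p' < p, z < v, t1 < v & t2 < v] /\
  [/\ on_block t1 p', on_block t1 z, on_block t2 z & on_block t2 p].
Proof.
move=> hp; have [?|?] := ltnP p a.
  have [?|?] := eqVneq p 1.
    exists 0, (a + c + 1), (2 * a), 1; split; first by split; lia.
    by split; prove_on_block.
  exists (p - 2), (a + c + p), (a + p - 2), p; split; first by split; lia.
  by split; prove_on_block.
have [?|?] := ltnP p (a + c).
  exists (p - a), p, (a + p), (a + p); split; first by split; lia.
  by split; prove_on_block.
exists (p - a - c), p, (p - a - c), (p - a - c); split; first by split; lia.
by split; prove_on_block.
Qed.

Definition config_blocks (t : 'I_v) : {set 'I_v} := [set p : 'I_v | on_block t p].

(* The three axioms of a symmetric configuration v_3; point degrees follow
   from the block sizes by double counting. *)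
Lemma config_is_v3 : is_config_v3 config_blocks.
Proof.
have block3 t : #|config_blocks t| = 3.
  have [p1 [p2 [p3 [hp hdist hP]]]] := block_points (ltn_ord t).
  exact: card_three hp hdist hP.
split; [exact: block3 | split].
- apply: degree_eq_of_ge block3 _ => x.
  have [t1 [t2 [t3 [[h1 h2 h3] [d12 d13 d23] [on1 on2 on3]]]]] := point_blocks (ltn_ord x).
  apply/card_gt2P; exists (Ordinal h1), (Ordinal h2), (Ordinal h3).
  split; first by rewrite !inE on1 on2 on3.
  by rewrite -!val_eqE /= d12 d23 eq_sym d13.
- move=> x y nxy; apply/card_le1_eqP => j k; rewrite !inE => /andP [jx jy] /andP [kx ky].
  have nxy' : val x != val y by rewrite val_eqE.
  exact/val_inj/(on_block_unique (ltn_ord k) (ltn_ord j) (ltn_ord x) (ltn_ord y) nxy' kx ky jx jy).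
Qed.

Lemma config_is_connected : config_connected config_blocks.
Proof.
have v0 : 0 < v by lia.
apply: (@connected_of_point _ _ (Ordinal v0)).
- apply: connect_descent => p hp.
  have p_pos : 0 < p < v.
    rewrite ltn_ord andbT lt0n; apply: contra hp => /eqP p0; apply/eqP; exact: val_inj.
  have [p' [z [t1 [t2 [[hp' hz ht1 ht2] [on1 on2 on3 on4]]]]]] := linked_to_smaller p_pos.
  have hp'v : p' < v by lia.
  exists (Ordinal hp'v) => //.
  apply: (@connect_trans _ _ (inl (Ordinal hz))).
    by apply: (@connect_collinear _ _ (Ordinal ht1)); rewrite inE.
  by apply: (@connect_collinear _ _ (Ordinal ht2)); rewrite inE.
- move=> t; have [p hpa hon] := block_meets_X (ltn_ord t).
  have hpv : p < v by lia.
  by exists (Ordinal hpv); rewrite inE.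
Qed.

Lemma config_blocking q :
  a <= q <= a + c -> blocking_set config_blocks [set x : 'I_v | x < q].
Proof.
apply: initial_segment_blocking => t.
- have [p hpa hon] := block_meets_X (ltn_ord t); have hpv : p < v by lia.
  by exists (Ordinal hpv); first rewrite inE.
- have [p /andP [hpZ hpv] hon] := block_meets_Z (ltn_ord t).
  by exists (Ordinal hpv); first rewrite inE.
Qed.

End Construction.

Theorem mainTheorem2 (v : nat) (hv : 9 <= v) :
  exists B : 'I_v -> {set 'I_v},
    is_config_v3 B /\ config_connected B /\
    forall q : nat, (v + 2) %/ 3 <= q -> q <= (2 * v) %/ 3 ->
      exists Q : {set 'I_v}, #|Q| = q /\ blocking_set B Q.
Proof.
have [a [c [hca hac hv9 ->]]] :
    exists a c, [/\ c <= a, a <= c + 2, 9 <= 2 * a + c & v = 2 * a + c].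
  by exists ((v + 2) %/ 3), (v - 2 * ((v + 2) %/ 3)); split; lia.
exists (@config_blocks a c); split; first exact: config_is_v3.
split; first exact: config_is_connected.
move=> q hq_lo hq_hi; exists [set x : 'I_(2 * a + c) | x < q]; split.
  by apply: card_initial_segment; lia.
by apply: config_blocking => //; lia.
Qed.
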